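(* Let $\phi$ be a function mapping every non-empty subset of $\mathbb{R}^2$ to a non-empty subset of $\mathbb{R}^2$ that satisfies Properties 1 and 2 below. Let $T=\{T_1,\dots,T_m\}$ be a set of pairwise non-crossing geometric trees in the plane. Then the $\phi$-cover of $T$ is well-defined: any two executions of the merging process described below on $T$ output the same set $\mathcal{C}$, regardless of the arbitrary choices made.
   Context: A geometric tree is a plane straight-line embedding of a tree in $\mathbb{R}^2$ (viewed as a subset of $\mathbb{R}^2$). Property 1: for every non-empty $A\subseteq\mathbb{R}^2$, $A\subseteq\phi(A)$. Property 2: for all non-empty $A,B\subseteq\mathbb{R}^2$, if $A\subseteq\phi(B)$ then $\phi(A)\subseteq\phi(B)$. The merging process: start with $\mathcal{C}=\{\phi(T_i)\mid 1\le i\le m\}$ (a collection of sets, each tracked as a separate element); while the elements of $\mathcal{C}$ are not pairwise disjoint, choose arbitrarily two distinct elements $C,C'$ of $\mathcal{C}$ with $C\cap C'\neq\emptyset$ and replace them in $\mathcal{C}$ by $\phi(C\cup C')$; when the elements are pairwise disjoint, output $\mathcal{C}$. The output is called the $\phi$-cover of $T$. *)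

From HB Require Import structures.
From mathcomp Require Import all_boot all_order all_algebra.
From mathcomp Require Import classical_sets reals.
From Stdlib Require Import Permutation.
Set Implicit Arguments. Unset Strict Implicit. Unset Printing Implicit Defensive.
Import Order.TTheory GRing.Theory Num.Theory.
Local Open Scope ring_scope.
Local Open Scope classical_set_scope.

Section Geom.
Variable R : realType.

Definition pt2 : Type := (R * R)%type.

Definition segment (p q : pt2) : set pt2 :=
  [set x | exists t : R, 0 <= t <= 1 /\
     x = ((1 - t) * p.1 + t * q.1, (1 - t) * p.2 + t * q.2)].

Definition edge_seg (e : pt2 * pt2) : set pt2 := segment e.1 e.2.

Definition adj (E : seq (pt2 * pt2)) (a b : pt2) : bool :=
  ((a, b) \in E) || ((b, a) \in E).

Definition is_tree (V : seq pt2) (E : seq (pt2 * pt2)) : Prop :=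
  [/\ V != [::], uniq V,
      (forall e, e \in E -> [/\ e.1 \in V, e.2 \in V & e.1 != e.2]),
      (forall u v, u \in V -> v \in V ->
         exists p : seq pt2, path (adj E) u p && (last u p == v))
    & size E = (size V).-1]%N.

Definition is_plane_tree (V : seq pt2) (E : seq (pt2 * pt2)) : Prop :=
  [/\ is_tree V E,
      (forall v e, v \in V -> e \in E -> edge_seg e v -> v = e.1 \/ v = e.2)
    & (forall i j, (i < size E)%N -> (j < size E)%N -> i <> j ->
         let e := nth (0, 0) E i in let f := nth (0, 0) E j in
         edge_seg e `&` edge_seg f `<=`
           [set x | (x = e.1 \/ x = e.2) /\ (x = f.1 \/ x = f.2)])].

Definition gtree : Type := (seq pt2 * seq (pt2 * pt2))%type.

Definition carrier (T : gtree) : set pt2 :=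
  [set x | (x \in T.1) \/ exists2 e, e \in T.2 & edge_seg e x].

Definition non_crossing (T T' : gtree) : Prop :=
  forall e f, e \in T.2 -> f \in T'.2 ->
    edge_seg e `&` edge_seg f `<=`
      [set x | (x = e.1 \/ x = e.2) /\ (x = f.1 \/ x = f.2)].

(* one step: choose two distinct elements C, C' (distinct entries of the
   collection) that intersect, and replace them by phi (C `|` C') *)
Definition merge_step (phi : set pt2 -> set pt2)
    (Cs Cs' : seq (set pt2)) : Prop :=
  exists (C C' : set pt2) (rest : seq (set pt2)),
    [/\ Permutation Cs (C :: C' :: rest), C `&` C' !=set0
      & Cs' = phi (C `|` C') :: rest].

Definition pairwise_disjoint (Cs : seq (set pt2)) : Prop :=
  forall i j, (i < size Cs)%N -> (j < size Cs)%N -> i <> j ->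
    nth set0 Cs i `&` nth set0 Cs j = set0.

Inductive merges (phi : set pt2 -> set pt2) :
    seq (set pt2) -> seq (set pt2) -> Prop :=
  | merges_refl Cs : merges phi Cs Cs
  | merges_step Cs Cs' Cs'' :
      merge_step phi Cs Cs' -> merges phi Cs' Cs'' -> merges phi Cs Cs''.

Definition initial_collection (phi : set pt2 -> set pt2) (Ts : seq gtree) :
  seq (set pt2) := map (fun T => phi (carrier T)) Ts.

Definition merge_output (phi : set pt2 -> set pt2) (Ts : seq gtree)
    (Cs : seq (set pt2)) : Prop :=
  merges phi (initial_collection phi Ts) Cs /\ pairwise_disjoint Cs.

Definition as_set (Cs : seq (set pt2)) : set (set pt2) :=
  [set X | List.In X Cs].

End Geom.

From HB Require Import structures.
From mathcomp Require Import all_boot all_order all_algebra.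
From mathcomp Require Import classical_sets reals.
From Stdlib Require Import Permutation.
Set Implicit Arguments. Unset Strict Implicit.
Import Order.TTheory GRing.Theory Num.Theory.
Local Open Scope ring_scope.
Local Open Scope classical_set_scope.

(* Merging only enlarges sets (Property 1), so every output refines the
   initial collection.  Conversely, if an output C is pairwise disjoint and
   consists of phi-images, then every stage of any other execution stays
   refined by C: two merged sets meeting each other lie in elements of C that
   meet, hence in the same element phi(B), and Property 2 puts phi of their
   union inside phi(B) again.  So two outputs refine each other, and
   disjointness of their (non-empty) members makes them equal.  Of the
   hypotheses on the trees only their non-emptiness matters. *)

Lemma In_nthP {A : Type} (d : A) (s : seq A) x :
  List.In x s -> exists2 i, (i < size s)%N & nth d s i = x.
Proof.
elim: s => [|a s IH] //= [->|/IH [i Hi Hn]]; first by exists 0%N.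
by exists i.+1.
Qed.

Lemma Permutation_In_tail2 {A : Type} (s : seq A) x y rest z :
  Permutation s (x :: y :: rest) -> List.In z rest -> List.In z s.
Proof. by move=> Hs Hz; apply: (Permutation_in _ (Permutation_sym Hs)); right; right. Qed.

Definition refines {T : Type} (Ys Xs : seq (set T)) :=
  forall Y, List.In Y Ys -> exists2 X, List.In X Xs & Y `<=` X.

Lemma refines_refl {T : Type} (Xs : seq (set T)) : refines Xs Xs.
Proof. by move=> Y HY; exists Y. Qed.

Lemma refines_trans {T : Type} (Zs Ys Xs : seq (set T)) :
  refines Zs Ys -> refines Ys Xs -> refines Zs Xs.
Proof.
move=> HZY HYX Z /HZY [Y /HYX [X HX HYX'] HZY'].
by exists X => //; apply: subset_trans HYX'.
Qed.

Lemma setU_neq0_of_setI (T : Type) (A B : set T) : A `&` B !=set0 -> A `|` B !=set0.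
Proof. by case=> x [Ax _]; exists x; left. Qed.

Section Merging.
Variable R : realType.
Variable phi : set (pt2 R) -> set (pt2 R).
Hypothesis phi_neq0 : forall A : set (pt2 R), A !=set0 -> phi A !=set0.
Hypothesis phi_ext : forall A : set (pt2 R), A !=set0 -> A `<=` phi A.
Hypothesis phi_sub : forall A B : set (pt2 R), A !=set0 -> B !=set0 ->
  A `<=` phi B -> phi A `<=` phi B.

Definition phi_images (Cs : seq (set (pt2 R))) :=
  forall X, List.In X Cs -> exists2 B, B !=set0 & X = phi B.

Lemma merge_step_phi_images Cs Cs' :
  merge_step phi Cs Cs' -> phi_images Cs -> phi_images Cs'.
Proof.
case=> C [C' [rest [HP HCC' ->]]] HCs X /= [<-|HX].
  by exists (C `|` C'); first exact: setU_neq0_of_setI.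
exact/HCs/(Permutation_In_tail2 HP).
Qed.

Lemma merges_phi_images Cs Cs' :
  merges phi Cs Cs' -> phi_images Cs -> phi_images Cs'.
Proof. by elim=> // Xs Ys Zs /merge_step_phi_images HXY _ IH /HXY. Qed.

Lemma merge_step_refines Cs Cs' : merge_step phi Cs Cs' -> refines Cs Cs'.
Proof.
case=> C [C' [rest [HP HCC' ->]]] X HX.
have HU := phi_ext (setU_neq0_of_setI HCC').
case: (Permutation_in _ HP HX) => [<-|[<-|Hrest]].
- by exists (phi (C `|` C')); [left | move=> x Cx; apply: HU; left].
- by exists (phi (C `|` C')); [left | move=> x C'x; apply: HU; right].
- by exists X => //; right.
Qed.

Lemma merges_refines Cs Cs' : merges phi Cs Cs' -> refines Cs Cs'.
Proof.
elim=> [Xs|Xs Ys Zs /merge_step_refines HXY _]; first exact: refines_refl.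
exact: refines_trans.
Qed.

Lemma pairwise_disjoint_eq (Ds : seq (set (pt2 R))) D1 D2 :
  pairwise_disjoint Ds -> List.In D1 Ds -> List.In D2 Ds ->
  D1 `&` D2 !=set0 -> D1 = D2.
Proof.
move=> HDs /(In_nthP set0) [i Hi <-] /(In_nthP set0) [j Hj <-] [x Hx].
have [->//|/eqP Hij] := eqVneq i j.
by have /seteqP [/(_ x Hx)] := HDs i j Hi Hj Hij.
Qed.

Section RefinedByOutput.
Variable Ds : seq (set (pt2 R)).
Hypothesis Ds_disjoint : pairwise_disjoint Ds.
Hypothesis Ds_images : phi_images Ds.

Lemma merge_step_refined Cs Cs' :
  merge_step phi Cs Cs' -> refines Cs Ds -> refines Cs' Ds.
Proof.
case=> C [C' [rest [HP HCC' ->]]] HCs X /= [<-|HX]; last first.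
  exact/HCs/(Permutation_In_tail2 HP).
have [D HD HCD] := HCs C (Permutation_in _ (Permutation_sym HP) (or_introl erefl)).
have [D' HD' HC'D'] :=
  HCs C' (Permutation_in _ (Permutation_sym HP) (or_intror (or_introl erefl))).
have DD' : D' = D.
  apply: (pairwise_disjoint_eq Ds_disjoint HD' HD); rewrite setIC.
  by case: HCC' => x [Cx C'x]; exists x; split; [exact: HCD | exact: HC'D'].
subst D'; exists D => //; have [B HB DB] := Ds_images HD.
rewrite DB; apply: phi_sub => //; first exact: setU_neq0_of_setI.
by rewrite -DB => x [/HCD|/HC'D'].
Qed.

Lemma merges_refined Cs Cs' : merges phi Cs Cs' -> refines Cs Ds -> refines Cs' Ds.
Proof. by elim=> // Xs Ys Zs /merge_step_refined HXY _ IH /HXY. Qed.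

End RefinedByOutput.

Lemma mutual_refinement_In (Cs Ds : seq (set (pt2 R))) :
  pairwise_disjoint Cs -> (forall X, List.In X Cs -> X !=set0) ->
  refines Cs Ds -> refines Ds Cs -> forall X, List.In X Cs -> List.In X Ds.
Proof.
move=> HCs Cs_neq0 HCD HDC X HX.
have [D HD HXD] := HCD X HX; have [X' HX' HDX'] := HDC D HD.
have XX' : X = X'.
  apply: (pairwise_disjoint_eq HCs HX HX').
  by have [x Xx] := Cs_neq0 X HX; exists x; split; last exact/HDX'/HXD.
suff -> : X = D by [].
by apply/seteqP; split => // x /HDX'; rewrite -XX'.
Qed.

Lemma merge_output_In (Ts : seq (gtree R)) Cs1 Cs2 :
  (forall T, List.In T Ts -> carrier T !=set0) ->
  merge_output phi Ts Cs1 -> merge_output phi Ts Cs2 ->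
  forall X, List.In X Cs1 -> List.In X Cs2.
Proof.
move=> Ts_neq0 [H1 Cs1_disj] [H2 Cs2_disj].
have init_images : phi_images (initial_collection phi Ts).
  by move=> X /List.in_map_iff [T [<- /Ts_neq0 HT]]; exists (carrier T).
have Cs1_images := merges_phi_images H1 init_images.
have Cs2_images := merges_phi_images H2 init_images.
apply: mutual_refinement_In => //.
- by move=> X /Cs1_images [B /phi_neq0 ? ->].
- exact: merges_refined H1 (merges_refines H2).
- exact: merges_refined H2 (merges_refines H1).
Qed.

End Merging.

Lemma tree_carrier_neq0 (R : realType) (T : gtree R) :
  is_tree T.1 T.2 -> carrier T !=set0.
Proof.
case: T => [[|v V] E] [//= _ _ _ _ _].
by exists v; left; rewrite /= in_cons eqxx.
Qed.

Theorem theorem1 (R : realType) (phi : set (pt2 R) -> set (pt2 R))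
  (phi_ne : forall A : set (pt2 R), A !=set0 -> phi A !=set0)
  (prop1 : forall A : set (pt2 R), A !=set0 -> A `<=` phi A)
  (prop2 : forall A B : set (pt2 R), A !=set0 -> B !=set0 ->
     A `<=` phi B -> phi A `<=` phi B)
  (Ts : seq (gtree R))
  (Ts_trees : forall i, (i < size Ts)%N ->
     is_plane_tree (nth (nil, nil) Ts i).1 (nth (nil, nil) Ts i).2)
  (Ts_noncross : forall i j, (i < size Ts)%N -> (j < size Ts)%N -> i <> j ->
     non_crossing (nth (nil, nil) Ts i) (nth (nil, nil) Ts j))
  (Cs1 Cs2 : seq (set (pt2 R))) :
  merge_output phi Ts Cs1 -> merge_output phi Ts Cs2 ->
  as_set Cs1 = as_set Cs2.
Proof.
have Ts_neq0 T : List.In T Ts -> carrier T !=set0.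
  move=> /(In_nthP (nil, nil)) [i Hi <-].
  by have [+ _ _] := Ts_trees i Hi; exact: tree_carrier_neq0.
move=> H1 H2; apply/seteqP; split => X /=.
- exact: (merge_output_In phi_ne prop1 prop2 Ts_neq0 H1 H2).
- exact: (merge_output_In phi_ne prop1 prop2 Ts_neq0 H2 H1).
Qed.
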